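(* Let $\Phi:\mathbb{R}\to\mathbb{R}$ be smooth and convex, and let $r_\pm,v_\pm,\sigma\in\mathbb{R}$ with $\sigma\neq0$, $r_-\neq r_+$, $\sigma[\![r]\!]+[\![v]\!]=0$ and $\sigma[\![v]\!]+[\![\Phi'(r)]\!]=0$. Then there is a one-to-one correspondence between fronts $(R,V)$ with speed $\sigma$ and asymptotic states $(r_\pm,v_\pm)$ and bounded measurable solutions $W$ of $$W=\mathcal{A}\widehat\Phi'(\mathcal{A}W)\quad\text{with}\quad W(\varphi)\to\pm1 \text{ as }\varphi\to\pm\infty,$$ given by $V=\langle v\rangle+\tfrac12[\![v]\!]W$ and $R(\varphi-\tfrac12)=\langle r\rangle+\tfrac12[\![r]\!](\mathcal{A}W)(\varphi)$.
   Context: A front with speed $\sigma$ and asymptotic states $(r_\pm,v_\pm)$ is a pair $R,V\in C^1(\mathbb{R})\cap L^\infty(\mathbb{R})$ with $R(\varphi)\to r_\pm$, $V(\varphi)\to v_\pm$ as $\varphi\to\pm\infty$, solving $\sigma R'(\varphi)+V(\varphi+1)-V(\varphi)=0$ and $\sigma V'(\varphi)+\Phi'(R(\varphi))-\Phi'(R(\varphi-1))=0$ for all $\varphi$. Notation: $[\![\psi]\!]=\psi(r_+,v_+)-\psi(r_-,v_-)$, $\langle\psi\rangle=\tfrac12(\psi(r_+,v_+)+\psi(r_-,v_-))$. The averaging operator is $(\mathcal{A}U)(\varphi)=\int_{\varphi-1/2}^{\varphi+1/2}U(s)\,ds$. The normalised potential is $\widehat\Phi(w)=\frac{4}{[\![\Phi'(r)]\!][\![r]\!]}\Phi(\langle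 r\rangle+\tfrac12[\![r]\!]w)-\frac{2\langle\Phi'(r)\rangle}{[\![\Phi'(r)]\!]}w$ (note $[\![\Phi'(r)]\!]=\sigma^2[\![r]\!]\neq0$). *)

From HB Require Import structures.
From mathcomp Require Import all_boot all_order all_algebra.
From mathcomp Require Import all_classical all_reals all_analysis.
Set Implicit Arguments. Unset Strict Implicit. Unset Printing Implicit Defensive.
Import Order.TTheory GRing.Theory Num.Theory.
Import numFieldNormedType.Exports.
Local Open Scope classical_set_scope.
Local Open Scope ring_scope.

Section Defs.
Variable R : realType.

Definition smooth (Phi : R -> R) : Prop :=
  forall (n : nat) (x : R), derivable (derive1n n Phi) x 1.

Definition convexR (Phi : R -> R) : Prop :=
  forall (x y t : R), 0 <= t <= 1 ->
    Phi (t * x + (1 - t) * y) <= t * Phi x + (1 - t) * Phi y.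

Definition bounded_fun (f : R -> R) : Prop := exists M : R, forall x, `|f x| <= M.

Definition C1 (f : R -> R) : Prop :=
  (forall x, derivable f x 1) /\ continuous (derive1 f).

Definition front (Phi : R -> R) (sigma rm rp vm vp : R) (Rf Vf : R -> R) : Prop :=
  [/\ C1 Rf /\ C1 Vf, bounded_fun Rf /\ bounded_fun Vf,
      (Rf x @[x --> -oo] --> rm) /\ (Rf x @[x --> +oo] --> rp),
      (Vf x @[x --> -oo] --> vm) /\ (Vf x @[x --> +oo] --> vp) &
      (forall phi, sigma * derive1 Rf phi + Vf (phi + 1) - Vf phi = 0) /\
      (forall phi, sigma * derive1 Vf phi + derive1 Phi (Rf phi)
                     - derive1 Phi (Rf (phi - 1)) = 0)].

Definition avg (U : R -> R) (phi : R) : R :=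
  Rintegral (@lebesgue_measure R) `[phi - 2^-1, phi + 2^-1] U.

Definition jump (a_m a_p : R) : R := a_p - a_m.
Definition mean (a_m a_p : R) : R := 2^-1 * (a_p + a_m).

Definition Phihat (Phi : R -> R) (rm rp : R) (w : R) : R :=
  4 / (jump (derive1 Phi rm) (derive1 Phi rp) * jump rm rp)
    * Phi (mean rm rp + 2^-1 * jump rm rp * w)
  - 2 * mean (derive1 Phi rm) (derive1 Phi rp) / jump (derive1 Phi rm) (derive1 Phi rp) * w.

Definition Wsol (Phi : R -> R) (rm rp : R) (W : R -> R) : Prop :=
  [/\ measurable_fun setT W, bounded_fun W,
      (forall phi, W phi = avg (fun s => derive1 (Phihat Phi rm rp) (avg W s)) phi),
      W x @[x --> -oo] --> (-1 : R) & W x @[x --> +oo] --> (1 : R)].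

Definition V_of (vm vp : R) (W : R -> R) : R -> R :=
  fun phi => mean vm vp + 2^-1 * jump vm vp * W phi.
(* R(phi - 1/2) = <r> + [[r]]/2 (A W)(phi), i.e. R(x) = <r> + [[r]]/2 (A W)(x + 1/2) *)
Definition R_of (rm rp : R) (W : R -> R) : R -> R :=
  fun x => mean rm rp + 2^-1 * jump rm rp * avg W (x + 2^-1).

End Defs.

(* The correspondence is a change of unknowns.  Affine charts send -1 and 1
   to the asymptotic states; in them V is an affine image of W, R is one of
   the windowed primitive A W (shifted by 1/2), and Phihat' is Phi' read
   through the charts of r and of Phi'(r).  The front equations are
   first-order difference-differential equations, and since (A U)' is
   U(. + 1/2) - U(. - 1/2) for continuous U, each of them says that two
   functions have the same derivative.  Both functions have the same limit at
   +oo, so they coincide: the first equation forces R = R_of W, the second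
   W = A (Phihat' o A W).  Conversely, a bounded solution of the fixed-point
   equation is an average of a continuous function, hence C^1, and
   differentiating R_of W and V_of W reduces both front equations to the
   Rankine-Hugoniot conditions. *)

From Pilot Require Import Defs.
From HB Require Import structures.
From mathcomp Require Import all_boot all_order all_algebra.
From mathcomp Require Import all_classical all_reals all_analysis.
From mathcomp Require Import ring lra measurable_realfun.
Import Order.TTheory GRing.Theory Num.Theory.
Import numFieldNormedType.Exports.
Local Open Scope classical_set_scope.
Local Open Scope ring_scope.

Section affine.
Context {R : realType}.
Implicit Types (a b am ap w x d : R) (u : R -> R).

Definition affine a b w : R := a + b * w.

Definition interp am ap : R -> R := affine (mean am ap) (2^-1 * jump am ap).

Definition uninterp am ap : R -> R :=
  affine (- (2 / jump am ap * mean am ap)) (2 / jump am ap).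

Lemma interp1 am ap : interp am ap 1 = ap.
Proof. by rewrite /interp /affine /mean /jump; field. Qed.

Lemma interpN1 am ap : interp am ap (-1) = am.
Proof. by rewrite /interp /affine /mean /jump; field. Qed.

Lemma interpB am ap w1 w2 :
  interp am ap w1 - interp am ap w2 = 2^-1 * jump am ap * (w1 - w2).
Proof. by rewrite /interp /affine; ring. Qed.

Lemma interpK am ap : am != ap -> cancel (interp am ap) (uninterp am ap).
Proof.
rewrite eq_sym -subr_eq0 => japm w.
by rewrite /interp /uninterp /affine /mean /jump; field.
Qed.

Lemma uninterpK am ap : am != ap -> cancel (uninterp am ap) (interp am ap).
Proof.
rewrite eq_sym -subr_eq0 => japm w.
by rewrite /interp /uninterp /affine /mean /jump; field.
Qed.

Lemma uninterp1 {am ap} : am != ap -> uninterp am ap ap = 1.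
Proof. by move=> amp; rewrite -[X in uninterp _ _ X](interp1 am ap) interpK. Qed.

Lemma uninterpN1 {am ap} : am != ap -> uninterp am ap am = -1.
Proof. by move=> amp; rewrite -[X in uninterp _ _ X](interpN1 am ap) interpK. Qed.

Lemma continuous_affine a b : continuous (affine a b).
Proof. by move=> w; apply: cvgD; [exact: cvg_cst | exact: cvgMr]. Qed.

Lemma interp_cvg {T : Type} {F : set_system T} {FF : Filter F} am ap
    (u : T -> R) w :
  u @ F --> w -> (interp am ap \o u) @ F --> interp am ap w.
Proof. by move=> uw; apply: cvg_comp uw (continuous_affine _ _ w). Qed.

Lemma uninterp_cvg {T : Type} {F : set_system T} {FF : Filter F} am ap
    (u : T -> R) a :
  u @ F --> a -> (uninterp am ap \o u) @ F --> uninterp am ap a.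
Proof. by move=> ua; apply: cvg_comp ua (continuous_affine _ _ a). Qed.

Lemma is_derive_affine a b {u x d} :
  is_derive x 1 u d -> is_derive x 1 (affine a b \o u) (b * d).
Proof.
move=> ud; rewrite -[b * d]add0r.
exact: (is_deriveD (is_derive_cst a x 1) (is_deriveZ b ud)).
Qed.

(* [Defs.bounded_fun]: MathComp-Analysis' own [bounded_fun] would shadow it. *)
Lemma bounded_fun_affine a b {u} :
  Defs.bounded_fun u -> Defs.bounded_fun (affine a b \o u).
Proof.
move=> [M uM]; exists (`|a| + `|b| * M) => x.
rewrite (le_trans (ler_normD _ _))// lerD2l normrM.
by apply: ler_wpM2l.
Qed.

Lemma V_ofE am ap (W : R -> R) x : V_of am ap W x = interp am ap (W x).
Proof. by []. Qed.

End affine.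

Section calculus.
Context {R : realType}.
Implicit Types (f g df : R -> R) (x c d l : R).

Lemma derive1_is_derive {f x d} : is_derive x 1 f d -> derive1 f x = d.
Proof. by move=> fd; rewrite derive1E derive_val. Qed.

Lemma is_derive_comp_shift f x c d :
  is_derive (x + c) 1 f d -> is_derive x 1 (fun y => f (y + c)) d.
Proof.
move=> fd; have := @is_derive1_comp R f (shift c) x d 1 fd (is_derive_shift x 1 c).
by rewrite mulr1.
Qed.

Lemma continuous_is_derive {f df} : (forall x, is_derive x 1 f (df x)) ->
  continuous f.
Proof.
move=> fd x; apply/differentiable_continuous/derivable1_diffP.
by case: (fd x).
Qed.

Lemma C1_is_derive f df : (forall x, is_derive x 1 f (df x)) -> continuous df ->
  C1 f.
Proof.
move=> fd cdf; split=> [x|]; first by case: (fd x).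
by rewrite (_ : derive1 f = df)//; apply/funext => x; exact: derive1_is_derive.
Qed.

Lemma is_derive_derive1 {f} x : C1 f -> is_derive x 1 f (derive1 f x).
Proof. by case=> df _; apply: DeriveDef; rewrite ?derive1E. Qed.

Lemma smooth_C1 f : smooth f -> C1 f.
Proof.
move=> sf; split=> [x|x]; first exact: (sf 0%N x).
by apply/differentiable_continuous/derivable1_diffP; exact: (sf 1%N x).
Qed.

Lemma eq_is_derive_cvgy f g df l :
  (forall x, is_derive x 1 f (df x)) -> (forall x, is_derive x 1 g (df x)) ->
  f x @[x --> +oo] --> l -> g x @[x --> +oo] --> l -> f = g.
Proof.
move=> fd gd fl gl; apply/funext => x; apply/eqP; rewrite -subr_eq0; apply/eqP.
have fg0 (y : R) : is_derive y 1 (f - g) 0.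
  by apply: is_derive_eq (is_deriveB (fd y) (gd y)) _; rewrite subrr.
have fg_cst : f - g = cst ((f - g) x).
  by apply/funext => y; exact: is_derive_0_is_cst.
suff : (cst ((f - g) x) : R -> R) y @[y --> +oo] --> 0.
  by move=> lim0; rewrite (cvg_unique _ lim0 (cvg_cst _)).
by rewrite -fg_cst -(subrr l); exact: cvgB.
Qed.

Lemma continuous_comp_shift f c : continuous f -> continuous (fun x => f (x + c)).
Proof.
move=> cf x; apply: continuous_comp; last exact: cf.
by apply: cvgD; [exact: cvg_id | exact: cvg_cst].
Qed.

End calculus.

Section averaging.
Context {R : realType}.
Notation mu := (@lebesgue_measure R).
Implicit Types (f W : R -> R) (a b c l e M x y am ap : R).

Lemma window_length y : y + 2^-1 - (y - 2^-1) = 1 :> R.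
Proof. by field. Qed.

Lemma window_le y : y - 2^-1 <= y + 2^-1 :> R.
Proof. by rewrite -subr_ge0 window_length. Qed.

Lemma lebesgue_measure_itvcc a b : a <= b -> mu `[a, b] = (b - a)%:E.
Proof.
move=> ab; rewrite lebesgue_measure_itv/= lte_fin.
by case: ltgtP ab => // -> _; rewrite subrr.
Qed.

Lemma Rintegral_cst_itvcc l a b : a <= b ->
  \int[mu]_(x in `[a, b]) l = l * (b - a).
Proof.
move=> ab; rewrite Rintegral_cst//.
by rewrite -[X in fine X]/(mu `[a, b]) lebesgue_measure_itvcc.
Qed.

Lemma integrable_itvcc_bounded f a b M : measurable_fun setT f ->
  (forall x, a <= x <= b -> `|f x| <= M) -> mu.-integrable `[a, b] (EFin \o f).
Proof.
move=> mf fM; apply: measurable_bounded_integrable => //.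
- exact/compact_finite_measure/segment_compact.
- exact: measurable_funS mf.
- exists M; split; first exact: num_real.
  move=> N MN x /= xab; apply: le_trans (fM x _) (ltW MN).
  by move: xab; rewrite in_itv.
Qed.

Lemma continuous_integrable_itvcc a b f : continuous f ->
  mu.-integrable `[a, b] (EFin \o f).
Proof.
move=> cf; apply: continuous_compact_integrable; first exact: segment_compact.
exact: continuous_subspaceT.
Qed.

Lemma normr_Rintegral_itvcc_le f a b M : measurable_fun setT f ->
  (forall x, a <= x <= b -> `|f x| <= M) -> a <= b ->
  `|\int[mu]_(x in `[a, b]) f x| <= M * (b - a).
Proof.
move=> mf fM ab.
have mfn : measurable_fun setT (fun x => `|f x|) by exact: measurableT_comp mf.
have fnM x : a <= x <= b -> `|Num.norm (f x)| <= M by rewrite normr_id; exact: fM.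
rewrite -Rintegral_cst_itvcc//; apply: le_trans (le_normr_Rintegral _ _) _ => //.
  exact: integrable_itvcc_bounded fM.
apply: le_Rintegral => //; first exact: integrable_itvcc_bounded fnM.
by apply: (@integrable_itvcc_bounded _ _ _ `|M|) => //; exact: measurable_cst.
Qed.

Lemma Rintegral_itvcc_split f a b c : mu.-integrable `[a, c] (EFin \o f) ->
  a <= b -> b <= c ->
  \int[mu]_(x in `[a, c]) f x =
  \int[mu]_(x in `[a, b]) f x + \int[mu]_(x in `[b, c]) f x.
Proof.
move=> intf ab bc.
have := @Rintegral_itvB R f (BLeft a) (BRight c) b intf.
rewrite !bnd_simp => /(_ ab bc).
rewrite Rintegral_itv_obnd_cbnd; last first.
  by apply: integrableS intf => //; apply: subset_itvr; rewrite bnd_simp.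
by move=> <-; rewrite addrC subrK.
Qed.

Lemma dist_avg_le f l e y : measurable_fun setT f ->
  (forall s, y - 2^-1 <= s <= y + 2^-1 -> `|l - f s| <= e) ->
  `|l - avg f y| <= e.
Proof.
move=> mf fle.
have fbnd s : y - 2^-1 <= s <= y + 2^-1 -> `|f s| <= `|l| + e.
  move=> /fle lfe; rewrite -[f s](subKr l).
  by rewrite (le_trans (ler_normB _ _))// lerD2l.
have -> : l - avg f y = \int[mu]_(s in `[y - 2^-1, y + 2^-1]) (l - f s).
  rewrite RintegralB//; last exact: integrable_itvcc_bounded fbnd.
    by rewrite Rintegral_cst_itvcc ?window_le// window_length mulr1.
  by apply: (@integrable_itvcc_bounded _ _ _ `|l|) => //; exact: measurable_cst.
rewrite -[X in _ <= X]mulr1 -[X in _ <= _ * X](window_length y).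
apply: normr_Rintegral_itvcc_le fle _ => //; last exact: window_le.
by apply: measurable_funB => //; exact: measurable_cst.
Qed.

Lemma bounded_fun_avg f : measurable_fun setT f -> Defs.bounded_fun f ->
  Defs.bounded_fun (avg f).
Proof.
move=> mf [M fM]; exists M => y.
rewrite -normrN -[- _]add0r; apply: dist_avg_le => // s _.
by rewrite sub0r normrN.
Qed.

Lemma avg_cvgy f l : measurable_fun setT f ->
  f x @[x --> +oo] --> l -> avg f x @[x --> +oo] --> l.
Proof.
move=> mf /cvgrPdist_le fl; apply/cvgrPdist_le => e e0.
have [A [Ar fAl]] := fl e e0; exists (A + 1); split; first exact: num_real.
move=> y Ay; apply: dist_avg_le => // s /andP[ys _]; apply: fAl.
have : 2^-1 < 1 :> R by rewrite invf_lt1 ?ltr1n ?ltr0n.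
lra.
Qed.

Lemma avg_cvgNy f l : measurable_fun setT f ->
  f x @[x --> -oo] --> l -> avg f x @[x --> -oo] --> l.
Proof.
move=> mf /cvgrPdist_le fl; apply/cvgrPdist_le => e e0.
have [A [Ar fAl]] := fl e e0; exists (A - 1); split; first exact: num_real.
move=> y Ay; apply: dist_avg_le => // s /andP[_ sy]; apply: fAl.
have : 2^-1 < 1 :> R by rewrite invf_lt1 ?ltr1n ?ltr0n.
lra.
Qed.

Lemma avg_lipschitz f M x y : measurable_fun setT f -> (forall s, `|f s| <= M) ->
  x <= y <= x + 1 -> `|avg f y - avg f x| <= 2 * M * (y - x).
Proof.
move=> mf fM /andP[xy yx1].
have intf a b : mu.-integrable `[a, b] (EFin \o f).
  exact: integrable_itvcc_bounded (fun s _ => fM s).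
have half : 2^-1 + 2^-1 = 1 :> R by field.
rewrite /avg (@Rintegral_itvcc_split f _ (x + 2^-1)); [|exact: intf|lra|lra].
rewrite [X in _ - X](@Rintegral_itvcc_split f _ (y - 2^-1)); [|exact: intf|lra|lra].
(* the two windows share [y - 1/2, x + 1/2]; two strips of width y - x remain *)
have -> : forall a b c : R, a + b - (c + a) = b - c by move=> a b c; ring.
apply: le_trans (ler_normB _ _) _.
have -> : 2 * M * (y - x) = M * (y - x) + M * (y - x) by ring.
apply: lerD.
  have -> : y - x = y + 2^-1 - (x + 2^-1) by ring.
  apply: normr_Rintegral_itvcc_le mf (fun s _ => fM s) _; lra.
have -> : y - x = y - 2^-1 - (x - 2^-1) by ring.
apply: normr_Rintegral_itvcc_le mf (fun s _ => fM s) _; lra.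
Qed.

Lemma continuous_avg f : measurable_fun setT f -> Defs.bounded_fun f ->
  continuous (avg f).
Proof.
move=> mf [M fM] x.
have M0 : 0 <= M := le_trans (normr_ge0 _) (fM 0).
have lip y : `|x - y| <= 1 -> `|avg f x - avg f y| <= 2 * M * `|x - y|.
  rewrite ler_norml => xy1; have [le_xy|lt_yx] := leP x y.
    rewrite distrC [`|x - y|]distrC [`|y - x|]ger0_norm ?subr_ge0//.
    by apply: avg_lipschitz => //; lra.
  rewrite [`|x - y|]ger0_norm; last by rewrite subr_ge0 ltW.
  by apply: avg_lipschitz => //; lra.
apply/cvgrPdist_le => e e0.
have d0 : 0 < Num.min 1 (e / (2 * M + 1)).
  by rewrite lt_min ltr01 /= divr_gt0// ltr_wpDl// mulr_ge0.
exists (Num.min 1 (e / (2 * M + 1))) => // y /=.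
rewrite lt_min => /andP[/ltW /lip xy_lip xye].
apply: le_trans xy_lip _.
apply: le_trans (ler_wpM2l _ (ltW xye)) _; first by rewrite mulr_ge0.
rewrite mulrA ler_pdivrMr ?ltr_wpDl ?mulr_ge0//; nra.
Qed.

Lemma avg_derive f x : continuous f ->
  is_derive x 1 (avg f) (f (x + 2^-1) - f (x - 2^-1)).
Proof.
move=> cf.
pose F t := \int[mu]_(s in `[x - 1, t]) f s.
have dF t : x - 1 < t -> t < x + 1 -> is_derive t 1 F (f t).
  move=> xt tx.
  have intf := continuous_integrable_itvcc (x - 1) (x + 1) f cf.
  have [dFt <-] := continuous_FTC1_closed tx intf xt (cf t).
  by apply: DeriveDef; rewrite ?derive1E.
have avgE : \forall y \near x, F (y + 2^-1) - F (y - 2^-1) = avg f y.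
  exists (2^-1) => /=; first by rewrite invr_gt0 ltr0n.
  move=> y /=; rewrite ltr_norml => /andP[xy1 xy2].
  rewrite /F (@Rintegral_itvcc_split _ (x - 1) (y - 2^-1));
    [|exact: continuous_integrable_itvcc|lra|lra].
  by rewrite addrAC subrr add0r.
have half : 2^-1 + 2^-1 = 1 :> R by field.
apply: (near_eq_is_derive avgE); apply: is_deriveB; apply: is_derive_comp_shift;
  apply: dF; lra.
Qed.

Lemma R_ofE am ap W x : R_of am ap W x = interp am ap (avg W (x + 2^-1)).
Proof. by []. Qed.

Lemma is_derive_R_of am ap W x : continuous W ->
  is_derive x 1 (R_of am ap W) (2^-1 * jump am ap * (W (x + 1) - W x)).
Proof.
move=> cW; have half : 2^-1 + 2^-1 = 1 :> R by field.
apply: (is_derive_affine _ _ (u := fun y => avg W (y + 2^-1))).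
apply: is_derive_comp_shift; apply: is_derive_eq (avg_derive W _ cW) _.
by rewrite addrK -addrA half.
Qed.

Lemma R_of_cvgy am ap W : measurable_fun setT W ->
  W x @[x --> +oo] --> (1 : R) -> R_of am ap W x @[x --> +oo] --> ap.
Proof.
move=> mW /(avg_cvgy W _ mW) /(cvg_comp _ _ (cvg_addrr 2^-1)).
by move/(interp_cvg am ap); rewrite interp1; apply.
Qed.

Lemma R_of_cvgNy am ap W : measurable_fun setT W ->
  W x @[x --> -oo] --> (-1 : R) -> R_of am ap W x @[x --> -oo] --> am.
Proof.
move=> mW /(avg_cvgNy W _ mW) /(cvg_comp _ _ (cvg_addrr_Ny 2^-1)).
by move/(interp_cvg am ap); rewrite interpN1; apply.
Qed.

End averaging.

Lemma derive1_Phihat {R : realType} (Phi : R -> R) rm rp :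
  (forall x, derivable Phi x 1) -> rm != rp -> derive1 Phi rm != derive1 Phi rp ->
  derive1 (Phihat Phi rm rp) =
  uninterp (derive1 Phi rm) (derive1 Phi rp) \o derive1 Phi \o interp rm rp.
Proof.
move=> dPhi; rewrite eq_sym -subr_eq0 => jr0; rewrite eq_sym -subr_eq0 => jP0.
apply/funext => w.
have dint := is_derive_affine (mean rm rp) (2^-1 * jump rm rp) (is_derive_id w 1).
have dPhi_int := @is_derive1_comp R Phi (interp rm rp) w _ _
  (DeriveDef (dPhi _) (esym (derive1E _ _))) dint.
have := is_deriveB
  (is_deriveZ (4 / (jump (derive1 Phi rm) (derive1 Phi rp) * jump rm rp)) dPhi_int)
  (is_deriveZ (2 * mean (derive1 Phi rm) (derive1 Phi rp)
                 / jump (derive1 Phi rm) (derive1 Phi rp)) (is_derive_id w 1)).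
move/derive1_is_derive => ->.
rewrite /= /uninterp /affine /jump; rewrite /jump in jr0 jP0.
by rewrite /GRing.scale /=; field; apply/andP.
Qed.

Section fronts.
Context {R : realType} {Phi : R -> R} {rm rp vm vp sigma : R}.
Hypotheses (Phi_C1 : C1 Phi) (sigma_neq0 : sigma != 0) (rm_neq_rp : rm != rp).
Hypothesis mass_jump : sigma * jump rm rp + jump vm vp = 0.
Hypothesis momentum_jump :
  sigma * jump vm vp + jump (derive1 Phi rm) (derive1 Phi rp) = 0.

Local Notation Phi' := (derive1 Phi).
Local Notation Phihat' := (derive1 (Phihat Phi rm rp)).

Lemma jump_vE : jump vm vp = - (sigma * jump rm rp).
Proof. by apply/eqP; rewrite -addr_eq0 addrC mass_jump. Qed.

Lemma jump_Phi'E : jump (Phi' rm) (Phi' rp) = - (sigma * jump vm vp).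
Proof. by apply/eqP; rewrite -addr_eq0 addrC momentum_jump. Qed.

Lemma vm_neq_vp : vm != vp.
Proof.
have : jump vm vp != 0.
  by rewrite jump_vE oppr_eq0 mulf_neq0// /jump subr_eq0 eq_sym.
by rewrite /jump subr_eq0 eq_sym.
Qed.

Lemma Phi'_neq : Phi' rm != Phi' rp.
Proof.
have : jump (Phi' rm) (Phi' rp) != 0.
  by rewrite jump_Phi'E oppr_eq0 mulf_neq0// /jump subr_eq0 eq_sym vm_neq_vp.
by rewrite /jump subr_eq0 eq_sym.
Qed.

Let Phihat'E : Phihat' = uninterp (Phi' rm) (Phi' rp) \o Phi' \o interp rm rp :=
  derive1_Phihat Phi rm rp Phi_C1.1 rm_neq_rp Phi'_neq.

Lemma continuous_Phihat' : continuous Phihat'.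
Proof.
rewrite Phihat'E => w; apply: continuous_comp; first exact: continuous_affine.
by apply: continuous_comp; [exact: Phi_C1.2 | exact: continuous_affine].
Qed.

Lemma Phihat'1 : Phihat' 1 = 1.
Proof. by rewrite Phihat'E /= interp1 uninterp1 ?Phi'_neq. Qed.

Lemma Phi'_interp w : Phi' (interp rm rp w) = interp (Phi' rm) (Phi' rp) (Phihat' w).
Proof. by rewrite Phihat'E /= uninterpK ?Phi'_neq. Qed.

Lemma continuous_Phihat'_avg W : measurable_fun setT W -> Defs.bounded_fun W ->
  continuous (Phihat' \o avg W).
Proof.
move=> mW bW x.
by apply: continuous_comp; [exact: continuous_avg | exact: continuous_Phihat'].
Qed.

Lemma Wsol_is_derive W : Wsol Phi rm rp W -> forall x : R,
  is_derive x 1 W (Phihat' (avg W (x + 2^-1)) - Phihat' (avg W (x - 2^-1))).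
Proof.
case=> mW bW Wfix _ _ x.
have Wfix' : avg (Phihat' \o avg W) = W by apply/funext => y; rewrite [RHS]Wfix.
rewrite -{1}Wfix'; exact/avg_derive/continuous_Phihat'_avg.
Qed.

Lemma front_of_Wsol W : Wsol Phi rm rp W ->
  front Phi sigma rm rp vm vp (R_of rm rp W) (V_of vm vp W).
Proof.
move=> solW; have [mW bW _ Wm Wp] := solW.
have dW := Wsol_is_derive _ solW.
have cW : continuous W := continuous_is_derive dW.
have cG := continuous_Phihat'_avg _ mW bW.
have dR x := is_derive_R_of rm rp W x cW.
have dV (x : R) : is_derive x 1 (V_of vm vp W)
    (2^-1 * jump vm vp * (Phihat' (avg W (x + 2^-1)) - Phihat' (avg W (x - 2^-1)))).
  exact: is_derive_affine (dW x).
split.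
- split; [apply: C1_is_derive dR _ | apply: C1_is_derive dV _] => x;
    apply: cvgMr; apply: cvgB.
  + exact: continuous_comp_shift.
  + exact: cW.
  + exact: (continuous_comp_shift _ _ cG).
  + exact: (continuous_comp_shift _ _ cG).
- split; last exact: bounded_fun_affine bW.
  apply: (bounded_fun_affine _ _ (u := fun x => avg W (x + 2^-1))).
  by have [M AM] := bounded_fun_avg _ mW bW; exists M.
- by split; [exact: R_of_cvgNy | exact: R_of_cvgy].
- split.
    by move: Wm => /(interp_cvg vm vp); rewrite interpN1; apply.
  by move: Wp => /(interp_cvg vm vp); rewrite interp1; apply.
- split=> x.
    by rewrite (derive1_is_derive (dR x)) -addrA !V_ofE interpB jump_vE; ring.
  rewrite (derive1_is_derive (dV x)) -addrA !R_ofE !Phi'_interp interpB.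
  by rewrite jump_Phi'E (_ : x - 1 + 2^-1 = x - 2^-1); [ring | field].
Qed.

Section from_front.
Context {Rf Vf : R -> R}.
Hypotheses (Rf_C1 : C1 Rf) (Vf_C1 : C1 Vf) (Vf_bounded : Defs.bounded_fun Vf).
Hypothesis Rf_cvgy : Rf x @[x --> +oo] --> rp.
Hypotheses (Vf_cvgNy : Vf x @[x --> -oo] --> vm) (Vf_cvgy : Vf x @[x --> +oo] --> vp).
Hypothesis mass_eq : forall x, sigma * derive1 Rf x + Vf (x + 1) - Vf x = 0.
Hypothesis momentum_eq :
  forall x, sigma * derive1 Vf x + Phi' (Rf x) - Phi' (Rf (x - 1)) = 0.

Local Notation W := (uninterp vm vp \o Vf).

Let Vf_interp x : Vf x = interp vm vp (W x).
Proof. by rewrite /= uninterpK ?vm_neq_vp. Qed.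

Let W_is_derive (x : R) : is_derive x 1 W (2 / jump vm vp * derive1 Vf x).
Proof. exact: is_derive_affine (is_derive_derive1 x Vf_C1). Qed.

Let W_continuous : continuous W := continuous_is_derive W_is_derive.

Let W_measurable : measurable_fun setT W := continuous_measurable_fun W_continuous.

Let W_cvgy : W x @[x --> +oo] --> (1 : R).
Proof.
rewrite -[X in _ --> X](uninterp1 vm_neq_vp); exact: uninterp_cvg Vf_cvgy.
Qed.

Lemma front_R_ofE : Rf = R_of rm rp W.
Proof.
apply: eq_is_derive_cvgy _ (fun x => is_derive_R_of rm rp W x W_continuous)
  Rf_cvgy (R_of_cvgy rm rp _ W_measurable W_cvgy) => x.
apply: is_derive_eq (is_derive_derive1 x Rf_C1) _; apply: (mulfI sigma_neq0).
have -> : sigma * derive1 Rf x = - (Vf (x + 1) - Vf x).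
  by apply/eqP; rewrite -addr_eq0 addrA mass_eq.
by rewrite (Vf_interp (x + 1)) (Vf_interp x) interpB jump_vE; ring.
Qed.

Lemma front_avg_fix : W = avg (Phihat' \o avg W).
Proof.
have cG := continuous_Phihat'_avg _ W_measurable (bounded_fun_affine _ _ Vf_bounded).
apply: eq_is_derive_cvgy (fun x => avg_derive _ x cG) W_cvgy _ => [x|].
  apply: is_derive_eq (W_is_derive x) _.
  have Vf'E : derive1 Vf x =
      2^-1 * jump vm vp * (Phihat' (avg W (x + 2^-1)) - Phihat' (avg W (x - 2^-1))).
    apply: (mulfI sigma_neq0).
    have -> : sigma * derive1 Vf x = - (Phi' (Rf x) - Phi' (Rf (x - 1))).
      by apply/eqP; rewrite -addr_eq0 addrA momentum_eq.
    rewrite front_R_ofE !R_ofE !Phi'_interp interpB jump_Phi'E.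
    by rewrite (_ : x - 1 + 2^-1 = x - 2^-1); [ring | field].
  have jv0 : jump vm vp != 0 by rewrite /jump subr_eq0 eq_sym vm_neq_vp.
  by rewrite Vf'E /=; field.
have G1 : (Phihat' \o avg W) x @[x --> +oo] --> (1 : R).
  rewrite -[X in _ --> X]Phihat'1.
  exact: cvg_comp (avg_cvgy _ _ W_measurable W_cvgy) (continuous_Phihat' 1).
exact: avg_cvgy _ _ (continuous_measurable_fun cG) G1.
Qed.

Lemma Wsol_of_front : Wsol Phi rm rp W.
Proof.
split.
- exact: W_measurable.
- exact: bounded_fun_affine Vf_bounded.
- by move=> x; rewrite {1}front_avg_fix.
- rewrite -[X in _ --> X](uninterpN1 vm_neq_vp); exact: uninterp_cvg Vf_cvgNy.
- exact: W_cvgy.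
Qed.

End from_front.

End fronts.

Theorem lemma2p2 (R : realType) (Phi : R -> R) (rm rp vm vp sigma : R) :
  smooth Phi -> convexR Phi ->
  sigma != 0 -> rm != rp ->
  sigma * jump rm rp + jump vm vp = 0 ->
  sigma * jump vm vp + jump (derive1 Phi rm) (derive1 Phi rp) = 0 ->
  (forall W : R -> R, Wsol Phi rm rp W ->
     front Phi sigma rm rp vm vp (R_of rm rp W) (V_of vm vp W)) /\
  (forall Rf Vf : R -> R, front Phi sigma rm rp vm vp Rf Vf ->
     exists! W : R -> R, Wsol Phi rm rp W /\ Rf = R_of rm rp W /\ Vf = V_of vm vp W).
Proof.
move=> /smooth_C1 Phi_C1 _ sigma_neq0 rm_neq_rp mass momentum.
have vm_neq_vp := vm_neq_vp sigma_neq0 rm_neq_rp mass.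
split=> [W|Rf Vf]; first exact: front_of_Wsol.
case=> [[CR CV] [_ bV] [_ Rp] [Vm Vp] [eqR eqV]].
exists (uninterp vm vp \o Vf); split.
  split; first exact: (Wsol_of_front Phi_C1 sigma_neq0 rm_neq_rp mass momentum
    CR CV bV Rp Vm Vp eqR eqV).
  split; first exact: (front_R_ofE sigma_neq0 rm_neq_rp mass CR CV Rp Vp eqR).
  by apply/funext => x; rewrite V_ofE /= uninterpK.
by move=> W [_ [_ ->]]; apply/funext => x; rewrite /= V_ofE interpK.
Qed.
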